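(* Let $a_2,a_3$ be integers with $1<a_2<a_3$ and $A=\{1,a_2,a_3\}$. If $SG(A,n,p)$ is a canonical stride generator, then there is no stride generator $SG(A,n',p')$ with $n'<n$ (for any $p'$).
   Context: For integers $n$ and $i\ge 0$, an integer $x$ has an $n$-generation of order $i$ if there are integers $c_1,c_2\ge 0$ with $x+ia_3=c_2a_2+c_1$ and $c_1+c_2\le n+i$. For integers $n$ and $p\ge0$, $SG(A,n,p)$ is a stride generator if: (A) every integer $0\le x<a_3$ has an $n$-generation of some order $\le p$; (B) at least one integer $0\le x<a_3$ has no $n$-generation of order $<p$; (C) at least one integer $0\le y<a_3$ has no $(n-1)$-generation of any order $\le p+1$. Any such $y$ is a break. A break $y$ is canonical if there is no integer $j\ge 0$ with $y+ja_3=c_2a_2+c_1$, $c_1,c_2\ge0$, $c_1+c_2\le (n-1)+j$. A stride generator is canonical if all its breaks are canonical. *)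

From Stdlib Require Import ZArith Lia.
Open Scope Z_scope.

Definition has_gen (a2 a3 n i x : Z) : Prop :=
  0 <= i /\
  exists c1 c2 : Z, 0 <= c1 /\ 0 <= c2 /\
    x + i * a3 = c2 * a2 + c1 /\ c1 + c2 <= n + i.

Definition is_break (a2 a3 n p y : Z) : Prop :=
  0 <= y < a3 /\ forall i, 0 <= i <= p + 1 -> ~ has_gen a2 a3 (n - 1) i y.

Definition stride_generator (a2 a3 n p : Z) : Prop :=
  0 <= p /\
  (forall x, 0 <= x < a3 -> exists i, 0 <= i <= p /\ has_gen a2 a3 n i x) /\
  (exists x, 0 <= x < a3 /\ forall i, 0 <= i < p -> ~ has_gen a2 a3 n i x) /\
  (exists y, is_break a2 a3 n p y).

Definition canonical_break (a2 a3 n y : Z) : Prop :=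
  forall j, 0 <= j -> ~ has_gen a2 a3 (n - 1) j y.

Definition canonical_stride_generator (a2 a3 n p : Z) : Prop :=
  stride_generator a2 a3 n p /\
  forall y, is_break a2 a3 n p y -> canonical_break a2 a3 n y.

(* A canonical break y of SG(A,n,p) has no (n-1)-generation of any order.
   Generations are monotone in the level, so y has no n'-generation for any
   n' < n either; but a stride generator SG(A,n',p') must give every residue
   0 <= x < a3, in particular y, an n'-generation of some order. *)

From Stdlib Require Import ZArith Lia.
Open Scope Z_scope.

Lemma has_gen_mono (a2 a3 n m i x : Z) :
  n <= m -> has_gen a2 a3 n i x -> has_gen a2 a3 m i x.
Proof.
  intros Hnm [Hi [c1 [c2 (Hc1 & Hc2 & Hx & Hsum)]]].
  split; [exact Hi|].
  exists c1, c2; repeat split; lia.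
Qed.

Lemma canonical_break_no_gen (a2 a3 n n' i y : Z) :
  n' < n -> 0 <= i -> canonical_break a2 a3 n y -> ~ has_gen a2 a3 n' i y.
Proof.
  intros Hn Hi Hy Hgen.
  apply (Hy i Hi), (has_gen_mono a2 a3 n'); [lia | exact Hgen].
Qed.

Lemma canonical_stride_generator_has_canonical_break (a2 a3 n p : Z) :
  canonical_stride_generator a2 a3 n p ->
  exists y, 0 <= y < a3 /\ canonical_break a2 a3 n y.
Proof.
  intros [(_ & _ & _ & y & Hy) Hcan].
  exists y; split; [apply Hy | exact (Hcan y Hy)].
Qed.

Lemma stride_generator_generates (a2 a3 n p x : Z) :
  stride_generator a2 a3 n p -> 0 <= x < a3 ->
  exists i, 0 <= i /\ has_gen a2 a3 n i x.
Proof.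
  intros (_ & Hgen & _) Hx.
  destruct (Hgen x Hx) as [i [Hi Hix]].
  exists i; split; [lia | exact Hix].
Qed.

Theorem lemma13 (a2 a3 n p : Z) :
  1 < a2 < a3 ->
  canonical_stride_generator a2 a3 n p ->
  forall n' p' : Z, n' < n -> ~ stride_generator a2 a3 n' p'.
Proof.
  intros _ Hcsg n' p' Hn Hsg.
  destruct (canonical_stride_generator_has_canonical_break _ _ _ _ Hcsg)
    as [y [Hy Hcan]].
  destruct (stride_generator_generates _ _ _ _ _ Hsg Hy) as [i [Hi Hgen]].
  exact (canonical_break_no_gen _ _ _ _ _ _ Hn Hi Hcan Hgen).
Qed.
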